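(* Let $\theta=(\alpha,\beta,\sigma,\tau)$ with $\alpha,\beta\in\mathbb{R}$, $\sigma>0$, $\tau=\gamma\sigma$ for some $\gamma>0$. Let $F_N=\sum_{j=1}^N w_j\delta_{z_j}$ and $F'_{N'}=\sum_{j=1}^{N'}w'_j\delta_{z'_j}$ be probability measures on $\mathbb{R}$ and let $K=\min(N,N')$. Then \[ \|p_{\theta,F_N}-p_{\theta,F'_{N'}}\|_1\le 2\max_{1\le j\le K}\frac{\left(1+\frac{|\beta|}{\gamma}\right)|z_j-z'_j|}{\sigma}+\sum_{j=1}^K|w_j-w'_j|+\sum_{j=K+1}^N w_j+\sum_{j=K+1}^{N'}w'_j. \]
   Context: Errors-in-variables model: for $\theta=(\alpha,\beta,\sigma,\tau)$ and a probability measure $F$ on $\mathbb{R}$, $p_{\theta,F}(x,y)=\int\phi_\sigma(x-z)\,\phi_\tau(y-\alpha-\beta z)\,dF(z)$, where $\phi_s$ is the $N(0,s^2)$ density. $\|\cdot\|_1$ is the $L^1$ norm with respect to Lebesgue measure on $\mathbb{R}^2$. *)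

From HB Require Import structures.
From mathcomp Require Import all_boot all_order all_algebra.
From mathcomp Require Import all_classical all_reals all_analysis.
Set Implicit Arguments. Unset Strict Implicit. Unset Printing Implicit Defensive.
Import Order.TTheory GRing.Theory Num.Theory.
Local Open Scope ring_scope.

Definition phi {R : realType} (s x : R) : R := normal_pdf 0 s x.

(* p_{theta,F}(x,y) for theta = (a,b,s,t) and the discrete probability
   measure F = sum_{j<N} w j delta_{z j}; the integral against F is the
   finite weighted sum. *)
Definition p_mix {R : realType} (a b s t : R) (N : nat) (w z : nat -> R)
  (xy : R * R) : R :=
  \sum_(0 <= j < N) w j * (phi s (xy.1 - z j) * phi t (xy.2 - a - b * z j)).

Definition prob_weights {R : realType} (N : nat) (w : nat -> R) : Prop :=
  (forall j, (j < N)%N -> 0 <= w j) /\ \sum_(0 <= j < N) w j = 1.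

Definition L1norm2 {R : realType} (f : R * R -> R) : \bar R :=
  (\int[(@lebesgue_measure R \x @lebesgue_measure R)%E]_xy `|f xy|%:E)%E.

(* Split both mixtures into the pairs of components [j < minn N N'] and the
   two tails.  Pointwise, [|p - p'|] is at most the sum of the differences of
   the pairs plus the tails; after integration each tail contributes its mass
   and the [j]-th pair at most [w j * |k (z j) - k (z' j)|_1 + |w j - w' j|],
   where [k c] is the density [phi s (x - c) * phi t (y - a - b c)].  The L1
   distance of two product densities is at most the sum of the L1 distances of
   the factors, and two Gaussians [phi s (x - u)], [phi s (x - v)] both dominate
   [lam] times a narrower Gaussian centred at [(u + v) / 2], with
   [1 - lam <= |u - v| / s], so they are [2 |u - v| / s]-close in L1.  This gives
   [|k (z j) - k (z' j)|_1 <= 2 (1 + |b| / gamma) |z j - z' j| / s], and an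
   average of these bounds with total weight at most 1 is at most their
   maximum. *)

From HB Require Import structures.
From mathcomp Require Import all_boot all_order all_algebra.
From mathcomp Require Import all_classical all_reals all_analysis.
From mathcomp Require Import ring lra measurable_realfun.
Import Order.TTheory GRing.Theory Num.Theory.
Local Open Scope ring_scope.

Section truncated_sums.
Context {R : realDomainType}.
Implicit Types (a b w D : nat -> R).

Lemma sumr_tail_ge0 (K N : nat) a :
  (forall j, (j < N)%N -> 0 <= a j) -> 0 <= \sum_(K <= j < N) a j.
Proof.
move=> a0; rewrite big_nat_cond; apply: sumr_ge0 => j /andP[/andP[_ jN] _].
exact: a0.
Qed.

Lemma ler_sum_prefix (K N : nat) a : (K <= N)%N ->
  (forall j, (j < N)%N -> 0 <= a j) ->
  \sum_(0 <= j < K) a j <= \sum_(0 <= j < N) a j.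
Proof.
by move=> KN a0; rewrite (big_cat_nat (leq0n K) KN) lerDl sumr_tail_ge0.
Qed.

Lemma ler_dist_sum_minn (N N' : nat) a b :
  (forall j, (j < N)%N -> 0 <= a j) -> (forall j, (j < N')%N -> 0 <= b j) ->
  `|\sum_(0 <= j < N) a j - \sum_(0 <= j < N') b j| <=
  \sum_(0 <= j < minn N N') `|a j - b j| +
  \sum_(minn N N' <= j < N) a j + \sum_(minn N N' <= j < N') b j.
Proof.
move=> a0 b0; set K := minn N N'.
rewrite (big_cat_nat (leq0n K) (geq_minl N N')).
rewrite (big_cat_nat (leq0n K) (geq_minr N N')) /=.
rewrite opprD addrACA -sumrB -addrA.
apply: le_trans (ler_normD _ _) _; apply: lerD; first exact: ler_norm_sum.
apply: le_trans (ler_normB _ _) _.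
by rewrite !ger0_norm ?sumr_tail_ge0.
Qed.

Lemma sum_weighted_le_bigmax (K : nat) w D :
  (forall j, (j < K)%N -> 0 <= w j) -> \sum_(0 <= j < K) w j <= 1 ->
  \sum_(0 <= j < K) w j * D j <= \big[Num.max/0]_(0 <= j < K) D j.
Proof.
move=> w0 w1; set M := \big[Num.max/0]_(0 <= j < K) D j.
have M0 : 0 <= M by exact: bigmax_ge_id.
apply: le_trans (_ : \sum_(0 <= j < K) w j * M <= _).
  apply: ler_sum_nat => j /andP[_ jK]; rewrite ler_wpM2l ?w0 //.
  by apply: le_bigmax_seq; rewrite ?mem_index_iota.
by rewrite -mulr_suml ler_piMl.
Qed.

End truncated_sums.

Section ge0_integral_EFin.
Local Open Scope ereal_scope.
Context {d : measure_display} {T : measurableType d} {R : realType}.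
Variable mu : {measure set T -> \bar R}.
Implicit Types f g h : T -> R.

Lemma ge0_integralD_EFin f g :
  measurable_fun setT f -> measurable_fun setT g ->
  (forall x, 0 <= f x)%R -> (forall x, 0 <= g x)%R ->
  \int[mu]_x (f x + g x)%:E = \int[mu]_x (f x)%:E + \int[mu]_x (g x)%:E.
Proof.
move=> mf mg f0 g0; under eq_integral do rewrite EFinD.
by apply: ge0_integralD => //;
  first [exact/measurable_EFinP | move=> x _; rewrite lee_fin ?f0 ?g0].
Qed.

Lemma ge0_integralZl_real (k : R) f :
  measurable_fun setT f -> (0 <= k)%R -> (forall x, 0 <= f x)%R ->
  \int[mu]_x (k * f x)%:E = k%:E * \int[mu]_x (f x)%:E.
Proof.
move=> mf k0 f0; under eq_integral do rewrite EFinM.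
by apply: ge0_integralZl_EFin => //;
  first [exact/measurable_EFinP | move=> x _; rewrite lee_fin ?f0].
Qed.

Lemma ge0_integralD_le f g (a b : R) :
  measurable_fun setT f -> measurable_fun setT g ->
  (forall x, 0 <= f x)%R -> (forall x, 0 <= g x)%R ->
  \int[mu]_x (f x)%:E <= a%:E -> \int[mu]_x (g x)%:E <= b%:E ->
  \int[mu]_x (f x + g x)%:E <= (a + b)%:E.
Proof. by move=> mf mg f0 g0 fa gb; rewrite ge0_integralD_EFin // EFinD leeD. Qed.

Lemma ge0_integral_sum_le (r : seq nat) (F : nat -> T -> R) (b : nat -> R) :
  (forall i, measurable_fun setT (F i)) ->
  (forall i x, i \in r -> 0 <= F i x)%R ->
  (forall i, i \in r -> \int[mu]_x (F i x)%:E <= (b i)%:E) ->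
  \int[mu]_x (\sum_(i <- r) F i x)%:E <= (\sum_(i <- r) b i)%:E.
Proof.
elim: r => [|i r IHr] mF F0 Fb.
  by rewrite big_nil; under eq_integral do rewrite big_nil; rewrite integral0.
under eq_integral do rewrite big_cons.
have r_sub j : j \in r -> j \in i :: r by rewrite inE => ->; rewrite orbT.
rewrite big_cons; apply: ge0_integralD_le.
- exact: mF.
- exact: measurable_sum.
- by move=> x; apply: F0; rewrite mem_head.
- by move=> x; rewrite big_seq sumr_ge0 // => j /r_sub; apply: F0.
- by apply: Fb; rewrite mem_head.
- by apply: IHr => // [j x /r_sub|j /r_sub]; [apply: F0 | apply: Fb].
Qed.

Lemma integral_dist_le_overlap f g h (lam : R) :
  measurable_fun setT f -> measurable_fun setT g -> measurable_fun setT h ->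
  (0 <= lam)%R -> (forall x, 0 <= h x)%R ->
  (forall x, lam * h x <= f x)%R -> (forall x, lam * h x <= g x)%R ->
  \int[mu]_x (f x)%:E = 1 -> \int[mu]_x (g x)%:E = 1 -> \int[mu]_x (h x)%:E = 1 ->
  \int[mu]_x `|f x - g x|%:E <= (2 - 2 * lam)%:E.
Proof.
move=> mf mg mh lam0 h0 hf hg If Ig Ih.
pose F x := (f x + g x - 2 * lam * h x)%R.
have F0 x : (0 <= F x)%R by have := hf x; have := hg x; rewrite /F; lra.
have mF : measurable_fun setT F.
  by apply: measurable_funB; [exact: measurable_funD | exact: measurable_funM].
have m2h : measurable_fun setT (fun x => 2 * lam * h x)%R by exact: measurable_funM.
have f0 x : (0 <= f x)%R by apply: le_trans (hf x); rewrite mulr_ge0.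
have g0 x : (0 <= g x)%R by apply: le_trans (hg x); rewrite mulr_ge0.
have IF : \int[mu]_x (F x)%:E = (2 - 2 * lam)%:E.
  have : \int[mu]_x (F x + 2 * lam * h x)%:E = 2%:E.
    under eq_integral do rewrite /F subrK.
    by rewrite ge0_integralD_EFin ?If ?Ig.
  rewrite ge0_integralD_EFin // => [|x]; last by rewrite !mulr_ge0.
  rewrite ge0_integralZl_real ?Ih ?mule1 ?mulr_ge0 //.
  have : 0 <= \int[mu]_x (F x)%:E by apply: integral_ge0 => x _; rewrite lee_fin.
  by case: (\int[mu]_x (F x)%:E) => // r _; rewrite -EFinD => -[?]; congr EFin; lra.
rewrite -IF; apply: ge0_le_integral => //.
- exact/measurable_EFinP/measurableT_comp/measurable_funB.
- exact/measurable_EFinP.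
- move=> x _; have := hf x; have := hg x.
  by rewrite lee_fin ler_norml /F => ? ?; apply/andP; split; lra.
Qed.

Lemma integral_dist_scale_le (a a' : R) f f' :
  measurable_fun setT f -> measurable_fun setT f' ->
  (0 <= a)%R -> (forall x, 0 <= f' x)%R ->
  \int[mu]_x `|a * f x - a' * f' x|%:E <=
  a%:E * \int[mu]_x `|f x - f' x|%:E + `|a - a'|%:E * \int[mu]_x (f' x)%:E.
Proof.
move=> mf mf' a0 f'0.
have mdf : measurable_fun setT (fun x => `|f x - f' x|)%R.
  exact/measurableT_comp/measurable_funB.
rewrite -!ge0_integralZl_real // -ge0_integralD_EFin //; last 4 first.
- exact: measurable_funM.
- exact: measurable_funM.
- by move=> x; rewrite mulr_ge0.
- by move=> x; rewrite mulr_ge0.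
apply: ge0_le_integral => //.
- apply/measurable_EFinP/measurableT_comp => //.
  by apply: measurable_funB; apply: measurable_funM.
- by apply/measurable_EFinP/measurable_funD; apply: measurable_funM.
move=> x _; rewrite lee_fin.
have -> : (a * f x - a' * f' x = a * (f x - f' x) + (a - a') * f' x)%R by ring.
by rewrite (le_trans (ler_normD _ _)) // !normrM (ger0_norm a0) (ger0_norm (f'0 x)).
Qed.

End ge0_integral_EFin.

Section finite_mixture.
Local Open Scope ereal_scope.
Context {d : measure_display} {T : measurableType d} {R : realType}.
Variable mu : {measure set T -> \bar R}.

Lemma ge0_integral_mixture_le (r : seq nat) (w : nat -> R) (k : nat -> T -> R) :
  (forall j, j \in r -> 0 <= w j)%R -> (forall j, measurable_fun setT (k j)) ->
  (forall j x, 0 <= k j x)%R -> (forall j, \int[mu]_x (k j x)%:E = 1) ->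
  \int[mu]_x (\sum_(j <- r) w j * k j x)%:E <= (\sum_(j <- r) w j)%:E.
Proof.
move=> w0 mk k0 Ik; apply: ge0_integral_sum_le => [j|j x jr|j jr].
- exact: measurable_funM.
- by rewrite mulr_ge0 ?w0.
- by rewrite ge0_integralZl_real ?w0 // Ik mule1.
Qed.

Lemma integral_dist_mixture_le (N N' : nat) (w w' delta : nat -> R)
    (k k' : nat -> T -> R) :
  (forall j, (j < N)%N -> 0 <= w j)%R -> (forall j, (j < N')%N -> 0 <= w' j)%R ->
  (forall j, measurable_fun setT (k j)) -> (forall j, measurable_fun setT (k' j)) ->
  (forall j x, 0 <= k j x)%R -> (forall j x, 0 <= k' j x)%R ->
  (forall j, \int[mu]_x (k j x)%:E = 1) -> (forall j, \int[mu]_x (k' j x)%:E = 1) ->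
  (forall j, \int[mu]_x `|k j x - k' j x|%:E <= (delta j)%:E) ->
  \int[mu]_x `|\sum_(0 <= j < N) w j * k j x - \sum_(0 <= j < N') w' j * k' j x|%:E
  <= (\sum_(0 <= j < minn N N') (w j * delta j + `|w j - w' j|)
      + \sum_(minn N N' <= j < N) w j + \sum_(minn N N' <= j < N') w' j)%:E.
Proof.
move=> w0 w'0 mk mk' k0 k'0 Ik Ik' Idk; set K := minn N N'.
have wK j : (j < K)%N -> (0 <= w j)%R.
  by move=> jK; apply: w0; apply: leq_trans jK (geq_minl _ _).
pose G1 x := (\sum_(0 <= j < K) `|w j * k j x - w' j * k' j x|)%R.
pose G2 x := (\sum_(K <= j < N) w j * k j x)%R.
pose G3 x := (\sum_(K <= j < N') w' j * k' j x)%R.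
have mdk j : measurable_fun setT (fun x => `|w j * k j x - w' j * k' j x|)%R.
  by apply: measurableT_comp => //; apply: measurable_funB; exact: measurable_funM.
have mG1 : measurable_fun setT G1 by exact: measurable_sum.
have mG2 : measurable_fun setT G2 by apply: measurable_sum => j; exact: measurable_funM.
have mG3 : measurable_fun setT G3 by apply: measurable_sum => j; exact: measurable_funM.
have G10 x : (0 <= G1 x)%R by rewrite sumr_ge0.
have G20 x : (0 <= G2 x)%R by apply: sumr_tail_ge0 => j jN; rewrite mulr_ge0 ?w0.
have G30 x : (0 <= G3 x)%R by apply: sumr_tail_ge0 => j jN; rewrite mulr_ge0 ?w'0.
have IG1 : \int[mu]_x (G1 x)%:E
           <= (\sum_(0 <= j < K) (w j * delta j + `|w j - w' j|))%:E.
  apply: ge0_integral_sum_le => // j; rewrite mem_index_iota => /andP[_ jK].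
  apply: le_trans (integral_dist_scale_le mu _ _ _ _ (mk j) (mk' j) (wK j jK) (k'0 j)) _.
  rewrite Ik' mule1 EFinD EFinM leeD2r //.
  by apply: lee_wpmul2l; rewrite ?lee_fin ?wK.
have IG2 : \int[mu]_x (G2 x)%:E <= (\sum_(K <= j < N) w j)%:E.
  by apply: ge0_integral_mixture_le => // j; rewrite mem_index_iota => /andP[_ /w0].
have IG3 : \int[mu]_x (G3 x)%:E <= (\sum_(K <= j < N') w' j)%:E.
  by apply: ge0_integral_mixture_le => // j; rewrite mem_index_iota => /andP[_ /w'0].
apply: (@le_trans _ _ (\int[mu]_x (G1 x + G2 x + G3 x)%:E)).
  apply: ge0_le_integral => //.
  - apply/measurable_EFinP/measurableT_comp => //.
    by apply: measurable_funB; apply: measurable_sum => j; exact: measurable_funM.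
  - by apply/measurable_EFinP/measurable_funD => //; exact: measurable_funD.
  - move=> x _; rewrite lee_fin ler_dist_sum_minn // => j jN.
      by rewrite mulr_ge0 ?w0.
    by rewrite mulr_ge0 ?w'0.
apply: (ge0_integralD_le mu (fun x => G1 x + G2 x)%R G3) => //.
- exact: measurable_funD.
- by move=> x; rewrite addr_ge0.
- exact: (ge0_integralD_le mu G1 G2).
Qed.

End finite_mixture.

Section product_integral_EFin.
Local Open Scope ereal_scope.
Context {d1 d2 : measure_display} {T1 : measurableType d1} {T2 : measurableType d2}.
Context {R : realType}.
Variables (m1 : {sigma_finite_measure set T1 -> \bar R}).
Variables (m2 : {sigma_finite_measure set T2 -> \bar R}).

Lemma measurable_fun_tensor (f : T1 -> R) (g : T2 -> R) :
  measurable_fun setT f -> measurable_fun setT g ->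
  measurable_fun setT (fun z : T1 * T2 => f z.1 * g z.2)%R.
Proof.
move=> mf mg; apply: measurable_funM.
- exact: measurableT_comp mf measurable_fst.
- exact: measurableT_comp mg measurable_snd.
Qed.

Lemma integral_tensor (f : T1 -> R) (g : T2 -> R) :
  measurable_fun setT f -> measurable_fun setT g ->
  (forall x, 0 <= f x)%R -> (forall y, 0 <= g y)%R ->
  \int[m1 \x m2]_z (f z.1 * g z.2)%:E =
  \int[m1]_x (f x)%:E * \int[m2]_y (g y)%:E.
Proof.
move=> mf mg f0 g0.
rewrite fubini_tonelli1; last 2 first.
- by apply/measurable_EFinP; exact: measurable_fun_tensor.
- by move=> z; rewrite lee_fin mulr_ge0.
rewrite /fubini_F /= -ge0_integralZr //; last 3 first.
- exact/measurable_EFinP.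
- by move=> x _; rewrite lee_fin.
- by apply: integral_ge0 => y _; rewrite lee_fin.
by apply: eq_integral => x _; rewrite ge0_integralZl_real // muleC.
Qed.

Lemma integral_dist_tensor_le (f f' : T1 -> R) (g g' : T2 -> R) :
  measurable_fun setT f -> measurable_fun setT f' ->
  measurable_fun setT g -> measurable_fun setT g' ->
  (forall x, 0 <= f' x)%R -> (forall y, 0 <= g y)%R ->
  \int[m1 \x m2]_z `|f z.1 * g z.2 - f' z.1 * g' z.2|%:E <=
  \int[m1]_x `|f x - f' x|%:E * \int[m2]_y (g y)%:E +
  \int[m1]_x (f' x)%:E * \int[m2]_y `|g y - g' y|%:E.
Proof.
move=> mf mf' mg mg' f'0 g0.
have mdf : measurable_fun setT (fun x => `|f x - f' x|)%R.
  exact/measurableT_comp/measurable_funB.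
have mdg : measurable_fun setT (fun y => `|g y - g' y|)%R.
  exact/measurableT_comp/measurable_funB.
rewrite -!integral_tensor // -ge0_integralD_EFin //; last 4 first.
- exact: measurable_fun_tensor mdf mg.
- exact: measurable_fun_tensor mf' mdg.
- by move=> z; rewrite mulr_ge0.
- by move=> z; rewrite mulr_ge0.
apply: ge0_le_integral => //.
- apply/measurable_EFinP/measurableT_comp => //.
  by apply: measurable_funB; [exact: measurable_fun_tensor mf mg
                              |exact: measurable_fun_tensor mf' mg'].
- apply/measurable_EFinP.
  by apply: measurable_funD; [exact: measurable_fun_tensor mdf mg
                              |exact: measurable_fun_tensor mf' mdg].
move=> z _; rewrite lee_fin.
have -> : (f z.1 * g z.2 - f' z.1 * g' z.2 =
           (f z.1 - f' z.1) * g z.2 + f' z.1 * (g z.2 - g' z.2))%R by ring.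
by rewrite (le_trans (ler_normD _ _)) // !normrM (ger0_norm (g0 _)) (ger0_norm (f'0 _)).
Qed.

End product_integral_EFin.

Section gaussian_shift.
Context {R : realType}.
Local Notation mu := (@lebesgue_measure R).
Implicit Types s t c u v x y : R.

Lemma phi_ge0 s x : 0 <= phi s x.
Proof. exact: normal_pdf_ge0. Qed.

Lemma phiE s x : 0 < s -> phi s x = normal_peak s * expR (- x ^+ 2 / (s ^+ 2 *+ 2)).
Proof. by move=> s0; rewrite /phi normal_pdfE ?gt_eqF //= /normal_fun subr0. Qed.

Lemma measurable_phi_shift s c : measurable_fun setT (fun x => phi s (x - c)).
Proof.
apply: measurableT_comp (measurable_normal_pdf 0 s) _.
exact: measurable_funB.
Qed.

Lemma integral_phi_shift s c : 0 < s -> (\int[mu]_x (phi s (x - c))%:E = 1)%E.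
Proof.
move=> s0; rewrite -(integral_normal_pdf c s); apply: eq_integral => x _.
by rewrite /phi !normal_pdfE ?gt_eqF //= /normal_fun subr0.
Qed.

Lemma normal_peak_div s (k : R) : 0 < k -> normal_peak (s / k) = k * normal_peak s.
Proof.
move=> k0; rewrite /normal_peak.
have -> : (s / k) ^+ 2 * pi *+ 2 = k^-1 ^+ 2 * (s ^+ 2 * pi *+ 2).
  by field; rewrite gt_eqF.
rewrite sqrtrM ?sqr_ge0 // sqrtr_sqr ger0_norm ?invr_ge0 ?ltW //.
by rewrite invfM invrK.
Qed.

Lemma sqrD_le_dilate s t y e : 0 <= t -> `|e| = t * s ->
  (y + e) ^+ 2 <= (1 + t) ^+ 2 * y ^+ 2 + s ^+ 2 * (t ^+ 2 + t / 2).
Proof.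
move=> t0 he.
have e2 : e ^+ 2 = t ^+ 2 * s ^+ 2 by rewrite -real_normK ?num_real // he exprMn.
have ye : y * e <= `|y| * (t * s) by rewrite -he -normrM ler_norm.
have y2 : `|y| ^+ 2 = y ^+ 2 by rewrite real_normK ?num_real.
have : 0 <= t * (`|y| - s / 2) ^+ 2 by rewrite mulr_ge0 ?sqr_ge0.
have : 0 <= t ^+ 2 * y ^+ 2 by rewrite mulr_ge0 ?sqr_ge0.
nra.
Qed.

Lemma phi_ge_dilate s t m c x : 0 < s -> 0 <= t -> `|m - c| = t * s ->
  expR (- (t ^+ 2 + t / 2) / 2) / (1 + t) * phi (s / (1 + t)) (x - m)
  <= phi s (x - c).
Proof.
move=> s0 t0 hc; have t1 : 0 < 1 + t by lra.
rewrite !phiE ?divr_gt0 // normal_peak_div //.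
set a := - (t ^+ 2 + t / 2) / 2.
set b := (x - m) ^+ 2 / ((s / (1 + t)) ^+ 2 *+ 2).
rewrite [leLHS](_ : _ = normal_peak s * expR (a - b)); last first.
  by rewrite expRD /b mulNr; field; rewrite gt_eqF.
rewrite ler_wpM2l ?normal_peak_ge0 // ler_expR /a /b.
have -> : x - c = (x - m) + (m - c) by rewrite addrA subrK.
have -> : - (t ^+ 2 + t / 2) / 2 - (x - m) ^+ 2 / ((s / (1 + t)) ^+ 2 *+ 2) =
  - ((1 + t) ^+ 2 * (x - m) ^+ 2 + s ^+ 2 * (t ^+ 2 + t / 2)) / (s ^+ 2 *+ 2).
  by field; rewrite !gt_eqF.
rewrite !mulNr lerN2 ler_wpM2r ?invr_ge0 ?mulrn_wge0 ?sqr_ge0 //.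
exact: sqrD_le_dilate.
Qed.

Lemma integral_dist_phi_shift_le s u v : 0 < s ->
  (\int[mu]_x `|phi s (x - u) - phi s (x - v)|%:E <= (2 * `|u - v| / s)%:E)%E.
Proof.
move=> s0.
pose t := `|u - v| / (2 * s); pose m := (u + v) / 2.
have t0 : 0 <= t by rewrite divr_ge0 // mulr_ge0 // ltW.
have t1 : 0 < 1 + t by lra.
have ts : t * s = `|u - v| / 2 by rewrite /t; field; rewrite gt_eqF.
have hu : `|m - u| = t * s.
  rewrite ts /m (_ : _ - u = (v - u) / 2); last by field.
  by rewrite normrM distrC [`|2^-1|]ger0_norm.
have hv : `|m - v| = t * s.
  rewrite ts /m (_ : _ - v = (u - v) / 2); last by field.
  by rewrite normrM [`|2^-1|]ger0_norm.
pose lam := expR (- (t ^+ 2 + t / 2) / 2) / (1 + t).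
pose h x := phi (s / (1 + t)) (x - m).
apply: le_trans (integral_dist_le_overlap mu _ _ h lam _ _ _ _ _ _ _ _ _ _) _.
- exact: measurable_phi_shift.
- exact: measurable_phi_shift.
- exact: measurable_phi_shift.
- by rewrite divr_ge0 ?expR_ge0 // ltW.
- by move=> x; exact: phi_ge0.
- by move=> x; exact: phi_ge_dilate.
- by move=> x; exact: phi_ge_dilate.
- exact: integral_phi_shift.
- exact: integral_phi_shift.
- by apply: integral_phi_shift; rewrite divr_gt0.
have lam_ge : 1 - 2 * t <= lam.
  have : 1 - (t ^+ 2 + t / 2) / 2 <= expR (- (t ^+ 2 + t / 2) / 2).
    by rewrite -mulNr; exact: expR_ge1Dx.
  by rewrite /lam ler_pdivlMr //; nra.
rewrite lee_fin (_ : 2 * `|u - v| / s = 4 * t); first lra.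
by rewrite /t; field; rewrite gt_eqF.
Qed.

End gaussian_shift.

Section eiv_kernel.
Context {R : realType}.
Local Notation mu := (@lebesgue_measure R).
Variables (a b s t : R).
Hypotheses (s0 : 0 < s) (t0 : 0 < t).

(* [p_mix a b s t N w z] is [\sum_(0 <= j < N) w j * eiv_kernel (z j)] by
   conversion. *)
Definition eiv_kernel (c : R) (xy : R * R) : R :=
  phi s (xy.1 - c) * phi t (xy.2 - a - b * c).

Let phi_line_shift c y : phi t (y - a - b * c) = phi t (y - (a + b * c)).
Proof. by rewrite opprD addrA. Qed.

Let measurable_phi_line c : measurable_fun setT (fun y : R => phi t (y - a - b * c)).
Proof. by under eq_fun do rewrite phi_line_shift; exact: measurable_phi_shift. Qed.

Let integral_phi_line c : (\int[mu]_y (phi t (y - a - b * c))%:E = 1)%E.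
Proof. by under eq_integral do rewrite phi_line_shift; exact: integral_phi_shift. Qed.

Lemma measurable_eiv_kernel c : measurable_fun setT (eiv_kernel c).
Proof.
exact: measurable_fun_tensor (measurable_phi_shift s c) (measurable_phi_line c).
Qed.

Lemma eiv_kernel_ge0 c xy : 0 <= eiv_kernel c xy.
Proof. by rewrite mulr_ge0 ?phi_ge0. Qed.

Lemma integral_eiv_kernel c : (\int[mu \x mu]_xy (eiv_kernel c xy)%:E = 1)%E.
Proof.
rewrite (integral_tensor mu mu (fun x => phi s (x - c))
                              (fun y => phi t (y - a - b * c))).
- by rewrite integral_phi_shift // integral_phi_line mule1.
- exact: (measurable_phi_shift s c).
- exact: measurable_phi_line.
- by move=> x; exact: phi_ge0.
- by move=> y; exact: phi_ge0.
Qed.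

Lemma integral_dist_eiv_kernel_le c c' :
  (\int[mu \x mu]_xy `|eiv_kernel c xy - eiv_kernel c' xy|%:E
   <= (2 * `|c - c'| / s + 2 * (`|b| * `|c - c'|) / t)%:E)%E.
Proof.
apply: le_trans (integral_dist_tensor_le mu mu _ _ _ _
  (measurable_phi_shift s c) (measurable_phi_shift s c')
  (measurable_phi_line c) (measurable_phi_line c')
  (fun x => phi_ge0 _ _) (fun y => phi_ge0 _ _)) _.
rewrite integral_phi_line integral_phi_shift // mule1 mul1e EFinD leeD //.
  exact: integral_dist_phi_shift_le.
under eq_integral do rewrite !phi_line_shift.
apply: le_trans (integral_dist_phi_shift_le _ _ _ t0) _.
have -> : a + b * c - (a + b * c') = b * (c - c') by ring.
by rewrite normrM.
Qed.

End eiv_kernel.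

Theorem mainTheorem12 (R : realType) (alpha beta sigma gamma : R)
  (N N' : nat) (w z w' z' : nat -> R) :
  0 < sigma -> 0 < gamma ->
  prob_weights N w -> prob_weights N' w' ->
  (L1norm2 (fun xy => (p_mix alpha beta sigma (gamma * sigma) N w z xy
                     - p_mix alpha beta sigma (gamma * sigma) N' w' z' xy)%R)
  <= (2 * \big[Num.max/0]_(0 <= j < minn N N')
          ((1 + `|beta| / gamma) * `|z j - z' j| / sigma)
      + \sum_(0 <= j < minn N N') `|w j - w' j|
      + \sum_(minn N N' <= j < N) w j
      + \sum_(minn N N' <= j < N') w' j)%R%:E)%E.
Proof.
move=> s0 g0 [w0 w1] [w'0 w'1].
have t0 : 0 < gamma * sigma by rewrite mulr_gt0.
pose dist j := (1 + `|beta| / gamma) * `|z j - z' j| / sigma.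
pose k c := eiv_kernel alpha beta sigma (gamma * sigma) c.
rewrite /L1norm2 /p_mix.
apply: le_trans (integral_dist_mixture_le (lebesgue_measure \x lebesgue_measure)%E
  _ _ _ _ (fun j => 2 * dist j) (fun j => k (z j)) (fun j => k (z' j))
  w0 w'0 _ _ _ _ _ _ _) _.
- by move=> j; exact: measurable_eiv_kernel.
- by move=> j; exact: measurable_eiv_kernel.
- by move=> j xy; exact: eiv_kernel_ge0.
- by move=> j xy; exact: eiv_kernel_ge0.
- by move=> j; exact: integral_eiv_kernel.
- by move=> j; exact: integral_eiv_kernel.
- move=> j; rewrite (_ : 2 * dist j = 2 * `|z j - z' j| / sigma
                       + 2 * (`|beta| * `|z j - z' j|) / (gamma * sigma)).
    exact: integral_dist_eiv_kernel_le.
  by rewrite /dist; field; rewrite !gt_eqF.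
rewrite lee_fin big_split -!addrA !lerD2r.
under eq_bigr do rewrite mulrCA; rewrite -mulr_sumr ler_pM2l //.
apply: sum_weighted_le_bigmax.
- by move=> j jK; apply: w0; apply: leq_trans jK (geq_minl _ _).
- by rewrite -w1 ler_sum_prefix ?geq_minl.
Qed.
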